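(* Assume CH. There exists a set $A\subseteq\mathbb{R}^2$ which is a Hamel basis of $\mathbb{R}^2$ over $\mathbb{Q}$ and such that: for every strictly increasing continuous function $f:\mathbb{R}\to\mathbb{R}$ the set $\{x\in\mathbb{R}:(x,f(x))\in A\}$ is a strong Luzin set, and for every strictly decreasing locally absolutely continuous function $g:\mathbb{R}\to\mathbb{R}$ the set $\{x\in\mathbb{R}:(x,g(x))\in A\}$ is a strong Sierpiński set.
   Context: A Luzin set is $L\subseteq\mathbb{R}$ with $|L|=\mathfrak{c}$ and $L\cap M$ countable for every meager $M$; strong Luzin if moreover $L\cap B$ is uncountable for every non-meager Borel $B$. A Sierpiński set is $S\subseteq\mathbb{R}$ with $|S|=\mathfrak{c}$ and $S\cap N$ countable for every Lebesgue-null $N$; strong Sierpiński if moreover $S\cap B$ is uncountable for every Borel $B$ of positive measure. (For a locally absolutely continuous $g$, a subset of its graph is null for arc-length measure iff its projection to the $x$-axis is Lebesgue-null, so the condition says $A\cap\mathrm{graph}(g)$ is a strong Sierpiński set in the graph.) A Hamel basis of $\mathbb{R}^2$ is a basis over $\mathbb{Q}$. *)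

From Stdlib Require Import Reals QArith Qreals List.
Open Scope R_scope.

Definition countable_set (S : R -> Prop) : Prop :=
  exists f : R -> nat, forall x y, S x -> S y -> f x = f y -> x = y.

Definition has_card_c (S : R -> Prop) : Prop :=
  exists f : R -> R, (forall y, S (f y)) /\
    (forall y1 y2, f y1 = f y2 -> y1 = y2) /\
    (forall x, S x -> exists y, f y = x).

Definition CH : Prop := forall S : R -> Prop, countable_set S \/ has_card_c S.

Definition inter (S T : R -> Prop) : R -> Prop := fun x => S x /\ T x.

Definition open_set (U : R -> Prop) : Prop :=
  forall x, U x -> exists eps, 0 < eps /\ forall y, Rabs (y - x) < eps -> U y.

Definition closure (S : R -> Prop) : R -> Prop :=
  fun x => forall eps, 0 < eps -> exists y, S y /\ Rabs (y - x) < eps.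

Definition nowhere_dense (S : R -> Prop) : Prop :=
  forall a b, a < b -> exists x, a < x < b /\ ~ closure S x.

Definition meager (M : R -> Prop) : Prop :=
  exists N : nat -> R -> Prop, (forall n, nowhere_dense (N n)) /\
    (forall x, M x -> exists n, N n x).

Inductive borel : (R -> Prop) -> Prop :=
  | borel_open : forall U, open_set U -> borel U
  | borel_compl : forall S, borel S -> borel (fun x => ~ S x)
  | borel_union : forall Sn : nat -> R -> Prop,
      (forall n, borel (Sn n)) -> borel (fun x => exists n, Sn n x)
  | borel_ext : forall S T, borel S -> (forall x, S x <-> T x) -> borel T.

Definition null_set (N : R -> Prop) : Prop :=
  forall eps, 0 < eps -> exists a b : nat -> R,
    (forall n, a n <= b n) /\
    (forall x, N x -> exists n, a n < x < b n) /\
    (forall n, sum_f_R0 (fun i => b i - a i) n <= eps).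

Definition strong_luzin (L : R -> Prop) : Prop :=
  has_card_c L /\
  (forall M, meager M -> countable_set (inter L M)) /\
  (forall B, borel B -> ~ meager B -> ~ countable_set (inter L B)).

(* For a Borel set B, "positive Lebesgue measure" = "not Lebesgue-null". *)
Definition strong_sierpinski (S : R -> Prop) : Prop :=
  has_card_c S /\
  (forall N, null_set N -> countable_set (inter S N)) /\
  (forall B, borel B -> ~ null_set B -> ~ countable_set (inter S B)).

Definition R2 := (R * R)%type.

Fixpoint lin_comb (l : list (Q * R2)) : R2 :=
  match l with
  | nil => (0, 0)
  | (q, v) :: l' =>
      let s := lin_comb l' in (Q2R q * fst v + fst s, Q2R q * snd v + snd s)
  end.

Definition Q_independent (A : R2 -> Prop) : Prop :=
  forall l : list (Q * R2),
    NoDup (map snd l) -> Forall (fun p => A (snd p)) l ->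
    lin_comb l = (0, 0) -> Forall (fun p => Q2R (fst p) = 0) l.

Definition Q_spanning (A : R2 -> Prop) : Prop :=
  forall v : R2, exists l : list (Q * R2),
    Forall (fun p => A (snd p)) l /\ lin_comb l = v.

Definition hamel_basis_R2 (A : R2 -> Prop) : Prop :=
  Q_independent A /\ Q_spanning A.

Definition strictly_increasing (f : R -> R) : Prop :=
  forall x y, x < y -> f x < f y.

Definition strictly_decreasing (f : R -> R) : Prop :=
  forall x y, x < y -> f y < f x.

Definition abs_continuous_on (g : R -> R) (a b : R) : Prop :=
  forall eps, 0 < eps -> exists delta, 0 < delta /\
    forall (n : nat) (u v : nat -> R),
      a <= u 0%nat ->
      v n <= b ->
      (forall i, (i <= n)%nat -> u i <= v i) ->
      (forall i, (i < n)%nat -> v i <= u (S i)) ->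
      sum_f_R0 (fun i => v i - u i) n < delta ->
      sum_f_R0 (fun i => Rabs (g (v i) - g (u i))) n < eps.

Definition locally_abs_continuous (g : R -> R) : Prop :=
  forall a b, a < b -> abs_continuous_on g a b.

(** Under CH, well-order R so that every real has countably many predecessors, and let
    the reals also code all tasks: put a point on the graph of a given strictly monotone
    continuous function inside a given Borel set that is not small (small meaning meager for
    increasing and null for decreasing functions), or make a given vector a rational
    combination of basis points.  Task [a] is handled at stage [a] by points outside the span
    of the earlier ones and off every earlier-coded graph over its earlier-coded small set.
    Only a small set of choices is excluded at each stage: an earlier graph of the same
    monotonicity contributes its small set, one of the opposite monotonicity a single point.
    Each task has uncountably many codes, so a non-small Borel set meets every graph in
    uncountably many basis points, while a small set meets it only in points added before
    the stage coding that small set, of which there are countably many. *)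

From Stdlib Require Import ZArith Reals QArith Qreals List Lra Lia Classical ClassicalEpsilon
  FunctionalExtensionality PropExtensionality Cantor FinFun Wf_nat Wellfounded.
From mathcomp Require ssreflect ssrbool eqtype boolp wochoice Rstruct.
Open Scope R_scope.

Module WellOrder.
Import ssreflect ssrbool eqtype boolp wochoice Rstruct.
Lemma R_well_order : exists W : R -> R -> Prop,
  (forall S : R -> Prop, (exists x, S x) -> exists m, S m /\ forall y, S y -> W m y) /\
  (forall x y, W x y -> W y x -> x = y).
Proof.
case: (well_ordering_principle R) => W hW.
exists (fun x y => W x y = true); split.
- move=> S [x Sx].
  have ne : nonempty (fun y => `[< S y >]) by exists x; apply/asboolP.
  case: (hW _ ne) => m [[/asboolP m1 m2] _].
  by exists m; split=> // y Sy; apply: m2; apply/asboolP.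
- have W_refl : forall x, W x x.
    move=> x.
    have ne : nonempty (fun z => z == x) by exists x; rewrite /in_mem /= eqxx.
    case: (hW _ ne) => m [[/eqP -> m2] _].
    by apply: m2; rewrite /in_mem /= eqxx.
  move=> x y hxy hyx.
  have ne : nonempty (fun z => (z == x) || (z == y)).
    by exists x; rewrite /in_mem /= eqxx.
  case: (hW _ ne) => m [[m1 m2] uniq].
  have ux : m = x.
    apply: uniq; split; first by rewrite /in_mem /= eqxx.
    by move=> z; rewrite /in_mem /= => /orP [/eqP -> | /eqP ->].
  have uy : m = y.
    apply: uniq; split; first by rewrite /in_mem /= eqxx orbT.
    by move=> z; rewrite /in_mem /= => /orP [/eqP -> | /eqP ->].
  by rewrite -ux -uy.
Qed.
End WellOrder.

Definition countable {X : Type} (S : X -> Prop) : Prop :=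
  exists f : X -> nat, forall x y, S x -> S y -> f x = f y -> x = y.

Lemma partial_choice (X Y : Type) (x0 : X) (T : Y -> Prop) (P : Y -> X -> Prop) :
  (forall y, T y -> exists x, P y x) -> exists h : Y -> X, forall y, T y -> P y (h y).
Proof.
  intros H.
  destruct (choice (fun y x => T y -> P y x)) as [h Hh]; [|now exists h].
  intro y. destruct (classic (T y)) as [Ty | nTy].
  - destruct (H y Ty) as [x Hx]. now exists x.
  - exists x0. now intro.
Qed.

Lemma countable_sub {X : Type} (S T : X -> Prop) :
  (forall x, S x -> T x) -> countable T -> countable S.
Proof. intros H [f Hf]. exists f. intros; apply Hf; auto. Qed.

Lemma countable_subsingleton {X : Type} (S : X -> Prop) :
  (forall x y, S x -> S y -> x = y) -> countable S.
Proof. intros H. exists (fun _ => 0%nat). auto. Qed.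

Lemma countable_preimage {X Y : Type} (T : Y -> Prop) (S : X -> Prop) (h : X -> Y) :
  countable T -> (forall a, S a -> T (h a)) ->
  (forall a b, S a -> S b -> h a = h b -> a = b) -> countable S.
Proof. intros [f Hf] H1 H2. exists (fun a => f (h a)). intros a b Sa Sb E. auto. Qed.

Lemma countable_image {X Y : Type} (S : X -> Prop) (T : Y -> Prop) (g : X -> Y) :
  countable S -> (forall y, T y -> exists x, S x /\ g x = y) -> countable T.
Proof.
  intros [f Hf] H.
  destruct (classic (exists y, T y)) as [[y0 Ty0] | Hn].
  - destruct (H y0 Ty0) as [x0 _].
    destruct (partial_choice X Y x0 T (fun y x => S x /\ g x = y) H) as [h Hh].
    exists (fun y => f (h y)). intros y1 y2 T1 T2 E.
    destruct (Hh y1 T1) as [S1 <-]. destruct (Hh y2 T2) as [S2 <-].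
    f_equal. auto.
  - apply countable_subsingleton. intros y ? Ty. exfalso. eauto.
Qed.

Lemma countable_union {I X : Type} (J : I -> Prop) (S : I -> X -> Prop) :
  countable J -> (forall i, J i -> countable (S i)) ->
  countable (fun x => exists i, J i /\ S i x).
Proof.
  intros [fJ HJ] HS.
  destruct (classic (exists i, J i)) as [[i0 Ji0] | Hn].
  2: { apply countable_subsingleton. intros x ? [i [Ji _]]. exfalso. eauto. }
  destruct (partial_choice (X -> nat) I (fun _ => 0%nat) J
     (fun i g => forall x y, S i x -> S i y -> g x = g y -> x = y) HS) as [G HG].
  destruct (partial_choice I X i0 (fun x => exists i, J i /\ S i x)
     (fun x i => J i /\ S i x)) as [ix Hix]; [auto|].
  exists (fun x => Cantor.to_nat (fJ (ix x), G (ix x) x)).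
  intros x y Tx Ty E. apply Cantor.to_nat_inj in E. injection E as E1 E2.
  destruct (Hix x Tx) as [J1 S1]. destruct (Hix y Ty) as [J2 S2].
  assert (Ei : ix x = ix y) by auto.
  rewrite Ei in E2, S1, J1. eapply HG; eauto.
Qed.

Lemma countable_nat_union {X : Type} (S : nat -> X -> Prop) :
  (forall n, countable (S n)) -> countable (fun x => exists n, S n x).
Proof.
  intros H. apply countable_sub with (T := fun x => exists n, True /\ S n x).
  - intros x [n Hn]; eauto.
  - apply countable_union; auto. exists (fun n => n); auto.
Qed.

Lemma countable_union2 {X : Type} (S T : X -> Prop) :
  countable S -> countable T -> countable (fun x => S x \/ T x).
Proof.
  intros HS HT.
  apply countable_sub with (T := fun x => exists n, (if Nat.eqb n 0 then S else T) x).
  - intros x [H|H]; [exists 0%nat | exists 1%nat]; auto.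
  - apply countable_nat_union. intros [|n]; auto.
Qed.

Lemma countable_prod (X Y : Type) (S : X -> Prop) (T : Y -> Prop) :
  countable S -> countable T -> countable (fun p : X * Y => S (fst p) /\ T (snd p)).
Proof.
  intros [f Hf] [g Hg]. exists (fun p => Cantor.to_nat (f (fst p), g (snd p))).
  intros [a b] [c d] [H1 H2] [H3 H4] E. apply Cantor.to_nat_inj in E.
  injection E as E1 E2. simpl in *. f_equal; auto.
Qed.

Fixpoint code_list (l : list nat) : nat :=
  match l with nil => 0%nat | a :: l' => S (Cantor.to_nat (a, code_list l')) end.

Lemma code_list_inj l l' : code_list l = code_list l' -> l = l'.
Proof.
  revert l'. induction l as [|a l IH]; intros [|b l'] E; try discriminate; auto.
  apply eq_add_S in E. apply Cantor.to_nat_inj in E. injection E as -> E. f_equal; auto.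
Qed.

Lemma countable_lists (X : Type) (S : X -> Prop) : countable S -> countable (Forall S).
Proof.
  intros [f Hf]. exists (fun l => code_list (map f l)).
  intros l l' Hl Hl' E. apply code_list_inj in E.
  revert l' Hl' E. induction Hl as [|a l Sa Hl IH]; intros [|b l'] Hl' E; simpl in E;
    try discriminate; auto.
  injection E as E1 E2. inversion Hl'; subst. f_equal; auto.
Qed.

Lemma countable_Q : countable (fun _ : Q => True).
Proof.
  exists (fun q => Cantor.to_nat (Cantor.to_nat (Z.to_nat (Qnum q), Z.to_nat (- Qnum q)),
                                  Pos.to_nat (Qden q))).
  intros [a b] [c d] _ _ E. apply Cantor.to_nat_inj in E.
  apply pair_equal_spec in E as [E1 E2].
  apply Cantor.to_nat_inj, pair_equal_spec in E1 as [E1 E3].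
  simpl in *. f_equal; lia.
Qed.

Definition vadd (u w : R2) : R2 := (fst u + fst w, snd u + snd w).
Definition vscale (r : R) (u : R2) : R2 := (r * fst u, r * snd u).

Definition span (S : R2 -> Prop) (v : R2) : Prop :=
  exists l, Forall (fun p => S (snd p)) l /\ lin_comb l = v.

Lemma R2_eq (u w : R2) : fst u = fst w -> snd u = snd w -> u = w.
Proof. destruct u, w; simpl; intros; subst; auto. Qed.

Lemma lin_comb_app l1 l2 : lin_comb (l1 ++ l2) = vadd (lin_comb l1) (lin_comb l2).
Proof.
  induction l1 as [|[q v] l IH]; simpl.
  - apply R2_eq; simpl; ring.
  - rewrite IH. apply R2_eq; simpl; ring.
Qed.

Definition qscale (q : Q) (l : list (Q * R2)) : list (Q * R2) :=
  map (fun p => (q * fst p, snd p)%Q) l.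

Lemma lin_comb_qscale q l : lin_comb (qscale q l) = vscale (Q2R q) (lin_comb l).
Proof.
  induction l as [|[r v] l IH]; simpl.
  - apply R2_eq; simpl; ring.
  - rewrite IH. apply R2_eq; simpl; rewrite Q2R_mult; ring.
Qed.

Lemma span_mono (S T : R2 -> Prop) v : (forall p, S p -> T p) -> span S v -> span T v.
Proof.
  intros H [l [Hl E]]. exists l; split; auto.
  eapply Forall_impl; [|exact Hl]. simpl; auto.
Qed.

Lemma span_mem (S : R2 -> Prop) a : S a -> span S a.
Proof.
  intros Ha. exists ((1%Q, a) :: nil). split.
  - constructor; auto.
  - apply R2_eq; simpl; unfold Q2R; simpl; field.
Qed.

Lemma span_add S u w : span S u -> span S w -> span S (vadd u w).
Proof.
  intros [l1 [H1 E1]] [l2 [H2 E2]]. exists (l1 ++ l2). split.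
  - apply Forall_app; auto.
  - rewrite lin_comb_app, E1, E2; auto.
Qed.

Lemma span_qscale S q u : span S u -> span S (vscale (Q2R q) u).
Proof.
  intros [l [H E]]. exists (qscale q l). split.
  - apply Forall_map. eapply Forall_impl; [|exact H]. simpl; auto.
  - rewrite lin_comb_qscale, E; auto.
Qed.

Lemma span_countable S : countable S -> countable (span S).
Proof.
  intros HS.
  assert (Hcoef : countable (fun p : Q * R2 => True /\ S (snd p)))
    by (apply (countable_prod _ _ (fun _ : Q => True) S); auto using countable_Q).
  apply countable_lists in Hcoef.
  apply (countable_image _ _ lin_comb Hcoef).
  intros v [l [Hl E]]. exists l. split; auto.
  eapply Forall_impl; [|exact Hl]. simpl; auto.
Qed.

Lemma span_add_point S a v : span (fun p => S p \/ p = a) v ->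
  exists w q, span S w /\ v = vadd w (vscale (Q2R q) a).
Proof.
  intros [l [Hl <-]]. induction Hl as [|[q p] l Hp Hl IH].
  - exists (0, 0), 0%Q. split; [now exists nil|].
    apply R2_eq; simpl; unfold Q2R; simpl; ring.
  - destruct IH as [w [r [Hw E]]]. simpl lin_comb. rewrite E.
    destruct Hp as [Hp | <-].
    + exists (vadd (vscale (Q2R q) p) w), r. split.
      * apply span_add; auto. apply span_qscale, span_mem; auto.
      * apply R2_eq; simpl; ring.
    + exists w, (q + r)%Q. split; auto.
      apply R2_eq; simpl; rewrite Q2R_plus; ring.
Qed.

Lemma list_max_split {Y K : Type} (f : Y -> K) (lt : K -> K -> Prop)
  (lt_total : forall a b, a <> b -> lt a b \/ lt b a)
  (lt_trans : forall a b c, lt a b -> lt b c -> lt a c) (l : list Y) :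
  l <> nil -> NoDup (map f l) ->
  exists l1 x l2, l = l1 ++ x :: l2 /\ forall y, In y (l1 ++ l2) -> lt (f y) (f x).
Proof.
  induction l as [|a t IH]; intros Hne Hnd; [congruence|].
  destruct t as [|b t'].
  - exists nil, a, nil. split; auto. simpl; tauto.
  - inversion Hnd as [|? ? Hnin Hnd']; subst.
    destruct (IH ltac:(congruence) Hnd') as [l1 [x [l2 [E Hmax]]]].
    assert (Hax : f a <> f x).
    { intro Ex. apply Hnin. rewrite Ex. change (In (f x) (map f (b :: t'))).
      rewrite E. apply in_map, in_or_app; simpl; auto. }
    destruct (lt_total _ _ Hax) as [Hr | Hr].
    + exists (a :: l1), x, l2. split; [rewrite E; auto|].
      intros y [<- | Hy]; auto.
    + exists nil, a, (b :: t'). split; auto.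
      intros y Hy. change (In y (b :: t')) in Hy. rewrite E in Hy.
      apply in_app_or in Hy as [Hy | [<- | Hy]]; auto;
        eapply lt_trans; eauto using in_or_app.
Qed.

Lemma lin_comb_middle l1 q p l2 :
  lin_comb (l1 ++ (q, p) :: l2) = vadd (vscale (Q2R q) p) (lin_comb (l1 ++ l2)).
Proof. rewrite !lin_comb_app. apply R2_eq; simpl; ring. Qed.

Lemma vanishing_comb_span l1 q p l2 : lin_comb (l1 ++ (q, p) :: l2) = (0, 0) ->
  Q2R q <> 0 -> span (fun v => In v (map snd (l1 ++ l2))) p.
Proof.
  rewrite lin_comb_middle. intros E Hq.
  assert (Hq' : ~ (q == 0)%Q).
  { intro Hq0. apply Hq. rewrite (Qeq_eqR _ _ Hq0). unfold Q2R; simpl; ring. }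
  replace p with (vscale (Q2R (- / q)) (lin_comb (l1 ++ l2))).
  - apply span_qscale. exists (l1 ++ l2). split; auto.
    apply Forall_forall. intros y Hy. now apply in_map.
  - rewrite Q2R_opp, Q2R_inv by auto.
    injection E as E1 E2. apply R2_eq; simpl;
      apply (Rmult_eq_reg_l (Q2R q)); auto; field_simplify; auto; lra.
Qed.

(* In a vanishing combination the coefficient of the member with the largest key must vanish. *)
Lemma Q_independent_of_ordered_family {K : Type} (lt : K -> K -> Prop) (pt : K -> option R2) :
  (forall a b, a <> b -> lt a b \/ lt b a) ->
  (forall a b c, lt a b -> lt b c -> lt a c) ->
  (forall k p, pt k = Some p -> ~ span (fun q => exists k', lt k' k /\ pt k' = Some q) p) ->
  Q_independent (fun p => exists k, pt k = Some p).
Proof.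
  intros lt_total lt_trans Hfresh l Hnd HA E.
  destruct l as [|e t]; [constructor|].
  inversion HA as [|? ? [k0 _] _]; subst.
  destruct (partial_choice K R2 k0 (fun p => exists k, pt k = Some p)
              (fun p k => pt k = Some p)) as [key Hkey]; [auto|].
  revert Hnd HA E. generalize (e :: t) as l. clear e t.
  intro l. remember (length l) as n. revert l Heqn.
  induction n as [n IH] using (well_founded_induction Wf_nat.lt_wf).
  intros l Hn Hnd HA E. destruct l as [|e t]; [constructor|].
  assert (Hkeys : NoDup (map (fun p => key (snd p)) (e :: t))).
  { rewrite <- (map_map snd key). apply Injective_map_NoDup_in; auto.
    intros p p' Hp Hp' Ek.
    apply in_map_iff in Hp as [x [<- Hx]], Hp' as [x' [<- Hx']].
    rewrite Forall_forall in HA.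
    assert (Hk := Hkey _ (HA _ Hx)). rewrite Ek, (Hkey _ (HA _ Hx')) in Hk.
    now injection Hk. }
  destruct (list_max_split _ lt lt_total lt_trans (e :: t) ltac:(congruence) Hkeys)
    as [l1 [[q p] [l2 [El Hmax]]]].
  rewrite El in *. clear e t El.
  apply Forall_app in HA as [HA1 HA2]. inversion HA2 as [|? ? Hp HA3]; subst. simpl in Hp.
  assert (HArest : Forall (fun p => exists k, pt k = Some (snd p)) (l1 ++ l2))
    by (apply Forall_app; auto).
  destruct (Req_dec (Q2R q) 0) as [Hq | Hq].
  - assert (Erest : lin_comb (l1 ++ l2) = (0, 0)).
    { rewrite lin_comb_middle, Hq in E. injection E as E1 E2. apply R2_eq; simpl; lra. }
    assert (Hrest : Forall (fun p => Q2R (fst p) = 0) (l1 ++ l2)).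
    { apply (IH (length (l1 ++ l2))); auto.
      - rewrite !length_app; simpl; lia.
      - rewrite map_app in *. eapply NoDup_remove_1; eauto. }
    apply Forall_app in Hrest as [Hr1 Hr2]. apply Forall_app; auto.
  - exfalso. apply (Hfresh (key p) p (Hkey p Hp)).
    eapply span_mono; [|exact (vanishing_comb_span l1 q p l2 E Hq)].
    intros v Hv. apply in_map_iff in Hv as [y [<- Hy]]. exists (key (snd y)). split.
    + apply Hmax; auto.
    + apply Hkey. rewrite Forall_forall in HArest. auto.
Qed.

Lemma span_graph_countable P (h : R -> R) : countable P -> countable (fun x => span P (x, h x)).
Proof.
  intros HP. apply (countable_image _ _ fst (span_countable P HP)).
  intros x Hx. exists (x, h x); auto.
Qed.

(* Writing [(v1 - x, v2 + x) = w + q (x, -x)] with [w] in the span of [P] forces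
   [x = (v1 - w1) / (1 + q)] unless [v = w]. *)
Lemma span_shift_countable P v : countable P -> ~ span P v ->
  countable (fun x => span (fun p => P p \/ p = (x, - x)) (fst v - x, snd v + x)).
Proof.
  intros HP Hv.
  assert (Hc : countable (fun p : R2 * Q => span P (fst p) /\ (fun _ : Q => True) (snd p)))
    by (apply (countable_prod _ _ (span P) (fun _ : Q => True));
        [apply span_countable; auto | apply countable_Q]).
  apply (countable_image _ _ (fun p => (fst v - fst (fst p)) / (1 + Q2R (snd p))) Hc).
  intros x Hx. apply span_add_point in Hx as [w [q [Hw E]]].
  injection E as E1 E2. exists (w, q). simpl. split; auto.
  destruct (Req_dec (1 + Q2R q) 0) as [Hq|Hq].
  - exfalso. apply Hv. replace v with w; auto. apply R2_eq; nra.
  - field_simplify_eq; auto. lra.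
Qed.

Definition qenum (n : nat) : R :=
  let (a, r) := Cantor.of_nat n in let (b, q) := Cantor.of_nat r in (INR a - INR b) / INR (S q).

Lemma INR_Z_to_nat_sub z : INR (Z.to_nat z) - INR (Z.to_nat (- z)) = IZR z.
Proof. destruct z as [|p|p]; simpl; rewrite ?INR_IPR; unfold IZR; ring. Qed.

Lemma qenum_dense x y : x < y -> exists n, x < qenum n < y.
Proof.
  intros Hxy.
  destruct (archimed_cor1 (y - x)) as [N [HN N0]]; [lra|].
  assert (HN0 : 0 < INR N) by (apply lt_0_INR; lia).
  destruct (archimed (x * INR N)) as [Hz1 Hz2]. set (z := up (x * INR N)) in *.
  exists (Cantor.to_nat (Z.to_nat z, Cantor.to_nat (Z.to_nat (- z), pred N))).
  unfold qenum. rewrite !Cantor.cancel_of_to, INR_Z_to_nat_sub, Nat.succ_pred_pos by lia.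
  assert (Hstep : / INR N * INR N = 1) by (field; lra).
  split; apply (Rmult_lt_reg_r (INR N)); auto; unfold Rdiv; rewrite Rmult_assoc, Rinv_l by lra.
  - lra.
  - apply (Rmult_lt_compat_r (INR N)) in HN; auto. nra.
Qed.

Lemma continuous_eq_on_qenum (f g : R -> R) : continuity f -> continuity g ->
  (forall n, f (qenum n) = g (qenum n)) -> f = g.
Proof.
  intros Hf Hg H. apply functional_extensionality. intro x.
  apply NNPP. intro Ne.
  set (d := Rabs (f x - g x)). assert (Hd : 0 < d) by (apply Rabs_pos_lt; lra).
  destruct (Hf x (d/2) ltac:(lra)) as [a1 [Ha1 Hfx]].
  destruct (Hg x (d/2) ltac:(lra)) as [a2 [Ha2 Hgx]].
  assert (Hmin1 := Rmin_l a1 a2). assert (Hmin2 := Rmin_r a1 a2).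
  destruct (qenum_dense x (x + Rmin a1 a2)) as [n [Hn1 Hn2]].
  { assert (0 < Rmin a1 a2) by (apply Rmin_glb_lt; auto). lra. }
  assert (Hnx : Rabs (qenum n - x) = qenum n - x) by (apply Rabs_right; lra).
  specialize (Hfx (qenum n)). specialize (Hgx (qenum n)).
  simpl in Hfx, Hgx. unfold D_x, no_cond, R_dist in Hfx, Hgx.
  rewrite Hnx in Hfx, Hgx. rewrite H in Hfx.
  assert (Hf' : Rabs (g (qenum n) - f x) < d / 2) by (apply Hfx; repeat split; lra).
  assert (Hg' : Rabs (g (qenum n) - g x) < d / 2) by (apply Hgx; repeat split; lra).
  assert (Htri : d <= Rabs (g (qenum n) - f x) + Rabs (g (qenum n) - g x)).
  { unfold d. rewrite <- (Rabs_Ropp (g (qenum n) - f x)).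
    replace (f x - g x) with (- (g (qenum n) - f x) + (g (qenum n) - g x)) by ring.
    apply Rabs_triang. }
  lra.
Qed.

Definition cantor_term (c : nat -> bool) (i : nat) : R := if c i then (/4) ^ (S i) else 0.

Fixpoint cantor_partial (c : nat -> bool) (n : nat) : R :=
  match n with O => 0 | S m => cantor_partial c m + cantor_term c m end.

Lemma cantor_term_bounds c i : 0 <= cantor_term c i <= (/4) ^ (S i).
Proof.
  unfold cantor_term. assert (0 < (/4) ^ (S i)) by (apply pow_lt; lra).
  destruct (c i); lra.
Qed.

Lemma cantor_partial_mono c n m : cantor_partial c n <= cantor_partial c (n + m).
Proof.
  induction m as [|m IH].
  - rewrite Nat.add_0_r; lra.
  - rewrite Nat.add_succ_r. simpl. assert (H := cantor_term_bounds c (n + m)). lra.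
Qed.

Lemma cantor_partial_tail c j m :
  cantor_partial c (j + m) <= cantor_partial c j + (/3) * (/4) ^ j * (1 - (/4) ^ m).
Proof.
  induction m as [|m IH].
  - rewrite Nat.add_0_r. simpl. lra.
  - rewrite Nat.add_succ_r. simpl cantor_partial. assert (H := cantor_term_bounds c (j + m)).
    replace ((/4) ^ (S (j + m))) with (/4 * ((/4) ^ j * (/4) ^ m)) in H
      by (simpl; rewrite pow_add; ring).
    simpl pow.
    assert (0 < (/4) ^ j) by (apply pow_lt; lra). assert (0 < (/4) ^ m) by (apply pow_lt; lra).
    nra.
Qed.

Definition cantor_value (c : nat -> bool) : R.
Proof.
  refine (proj1_sig (completeness (fun y => exists n, y = cantor_partial c n) _ _)).
  - exists 1. intros y [n ->]. assert (H := cantor_partial_tail c 0 n). simpl in H.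
    assert (0 < (/4) ^ n) by (apply pow_lt; lra). lra.
  - exists 0, 0%nat. reflexivity.
Defined.

Lemma cantor_value_lub c : is_lub (fun y => exists n, y = cantor_partial c n) (cantor_value c).
Proof. unfold cantor_value. destruct completeness; auto. Qed.

(* Base 4 leaves room: the tail after a first difference is at most a third of its digit. *)
Lemma cantor_value_lt c c' k : (forall i, (i < k)%nat -> c i = c' i) ->
  c k = true -> c' k = false -> cantor_value c' < cantor_value c.
Proof.
  intros Hpre Hk Hk'.
  assert (Epre : forall n, (n <= k)%nat -> cantor_partial c n = cantor_partial c' n).
  { induction n as [|n IH]; intros Hn; simpl; auto.
    rewrite IH by lia. unfold cantor_term. rewrite Hpre by lia. auto. }
  destruct (cantor_value_lub c) as [U _]. destruct (cantor_value_lub c') as [_ L].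
  assert (H1 : cantor_partial c (S k) <= cantor_value c) by (apply U; eauto).
  simpl in H1. unfold cantor_term in H1. rewrite Hk, Epre in H1 by lia.
  assert (Hpos : 0 < (/4) ^ (S k)) by (apply pow_lt; lra).
  assert (H2 : cantor_value c' <= cantor_partial c' k + (/3) * (/4) ^ (S k)).
  { apply L. intros y [n ->].
    apply Rle_trans with (cantor_partial c' (S k + n)).
    - rewrite Nat.add_comm. apply cantor_partial_mono.
    - assert (H := cantor_partial_tail c' (S k) n).
      simpl cantor_partial in H at 2. unfold cantor_term in H. rewrite Hk' in H.
      assert (0 < (/4) ^ n) by (apply pow_lt; lra). nra. }
  lra.
Qed.

Lemma cantor_value_inj c c' : cantor_value c = cantor_value c' -> c = c'.
Proof.
  intros E. apply NNPP. intro Ne.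
  assert (Ex : exists k, c k <> c' k).
  { apply not_all_ex_not. intro H. now apply Ne, functional_extensionality. }
  destruct (dec_inh_nat_subset_has_unique_least_element _ (fun k => classic _) Ex)
    as [k [[Hk Hmin] _]].
  assert (Hpre : forall i, (i < k)%nat -> c i = c' i).
  { intros i Hi. apply NNPP. intro Hne. specialize (Hmin i Hne). lia. }
  destruct (c k) eqn:E1, (c' k) eqn:E2; try congruence.
  - assert (H := cantor_value_lt c c' k Hpre E1 E2). lra.
  - assert (H := cantor_value_lt c' c k ltac:(intros; symmetry; auto) E2 E1). lra.
Qed.

(* A real is determined by the set of rationals above it. *)
Definition cut_bits (x : R) (k : nat) : bool := if Rlt_dec x (qenum k) then true else false.

Lemma cut_bits_inj x y : cut_bits x = cut_bits y -> x = y.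
Proof.
  intros E. destruct (Rtotal_order x y) as [H|[H|H]]; auto; exfalso;
    [destruct (qenum_dense x y H) as [k Hk] | destruct (qenum_dense y x H) as [k Hk]];
    apply (f_equal (fun b => b k)) in E; unfold cut_bits in E;
    destruct (Rlt_dec x (qenum k)), (Rlt_dec y (qenum k)); try discriminate; lra.
Qed.

Definition encode_seq (s : nat -> R) : R :=
  cantor_value (fun n => let (i, k) := Cantor.of_nat n in cut_bits (s i) k).

Lemma encode_seq_inj s s' : encode_seq s = encode_seq s' -> s = s'.
Proof.
  intros E. apply cantor_value_inj in E. apply functional_extensionality. intro i.
  apply cut_bits_inj. apply functional_extensionality. intro k.
  apply (f_equal (fun f => f (Cantor.to_nat (i, k)))) in E.
  now rewrite Cantor.cancel_of_to in E.
Qed.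

Definition decode_seq (y : R) : nat -> R :=
  epsilon (inhabits (fun _ : nat => 0)) (fun s => encode_seq s = y).

Lemma decode_encode_seq s : decode_seq (encode_seq s) = s.
Proof.
  apply encode_seq_inj.
  exact (epsilon_spec (inhabits (fun _ : nat => 0)) (fun s' => encode_seq s' = encode_seq s)
    (ex_intro _ s eq_refl)).
Qed.

Record sigma_ideal (I : (R -> Prop) -> Prop) : Prop := {
  ideal_sub : forall S T, (forall x, S x -> T x) -> I T -> I S;
  ideal_nat_union : forall S : nat -> R -> Prop,
    (forall n, I (S n)) -> I (fun x => exists n, S n x);
  ideal_singleton : forall x0, I (fun x => x = x0) }.

Section SigmaIdeal.
Variable I : (R -> Prop) -> Prop.
Hypothesis HI : sigma_ideal I.

Lemma ideal_countable S : countable S -> I S.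
Proof.
  intros [f Hf].
  apply (ideal_sub _ HI) with (T := fun x => exists n, S x /\ f x = n).
  { intros x Hx; exists (f x); auto. }
  apply (ideal_nat_union _ HI). intro n.
  destruct (classic (exists x, S x /\ f x = n)) as [[x0 [Sx0 <-]]|Hn].
  - apply (ideal_sub _ HI) with (T := fun x => x = x0); [|apply (ideal_singleton _ HI)].
    intros x [Sx Ex]. auto.
  - apply (ideal_sub _ HI) with (T := fun x => x = 0); [|apply (ideal_singleton _ HI)].
    intros x Hx. exfalso. eauto.
Qed.

Lemma ideal_union {J : Type} (K : J -> Prop) (S : J -> R -> Prop) :
  countable K -> (forall j, K j -> I (S j)) -> I (fun x => exists j, K j /\ S j x).
Proof.
  intros [e He] HS.
  apply (ideal_sub _ HI) with (T := fun x => exists n, exists j, K j /\ e j = n /\ S j x).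
  { intros x [j [Kj Sj]]. exists (e j), j; auto. }
  apply (ideal_nat_union _ HI). intro n.
  destruct (classic (exists j, K j /\ e j = n)) as [[j [Kj <-]]|Hn].
  - apply (ideal_sub _ HI) with (T := S j); auto.
    intros x [j' [Kj' [Ej' Sx]]]. now rewrite (He j' j Kj' Kj Ej') in Sx.
  - apply ideal_countable, countable_subsingleton.
    intros x ? [j' [Kj' [Ej' _]]]. exfalso. eauto.
Qed.

Lemma ideal_union2 S T : I S -> I T -> I (fun x => S x \/ T x).
Proof.
  intros HS HT.
  apply (ideal_sub _ HI) with (T := fun x => exists n, (if Nat.eqb n 0 then S else T) x).
  - intros x [H|H]; [exists 0%nat | exists 1%nat]; auto.
  - apply (ideal_nat_union _ HI). intros [|n]; auto.
Qed.

End SigmaIdeal.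

Definition sum_list (F : nat -> R) (l : list nat) : R := fold_right (fun i acc => F i + acc) 0 l.

Lemma sum_list_app F l1 l2 : sum_list F (l1 ++ l2) = sum_list F l1 + sum_list F l2.
Proof. induction l1; simpl; [ring|]. rewrite IHl1; ring. Qed.

Lemma sum_list_seq F n : sum_list F (seq 0 (S n)) = sum_f_R0 F n.
Proof.
  induction n as [|n IH].
  - simpl. ring.
  - rewrite seq_S, sum_list_app, IH. simpl. ring.
Qed.

Lemma sum_list_nonneg F l : (forall i, 0 <= F i) -> 0 <= sum_list F l.
Proof. intros HF. induction l; simpl; [lra|]. specialize (HF a). lra. Qed.

Lemma sum_list_le_seq F N l : (forall i, 0 <= F i) -> NoDup l ->
  (forall i, In i l -> (i < N)%nat) -> sum_list F l <= sum_list F (seq 0 N).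
Proof.
  intros HF. revert l. induction N as [|N IH]; intros l Hnd Hb.
  - destruct l as [|i l]; [simpl; lra|]. specialize (Hb i (or_introl eq_refl)). lia.
  - rewrite seq_S, sum_list_app. simpl. destruct (in_dec Nat.eq_dec N l) as [HN|HN].
    + apply in_split in HN as [l1 [l2 ->]].
      rewrite sum_list_app. simpl.
      assert (Hle : sum_list F (l1 ++ l2) <= sum_list F (seq 0 N)).
      { apply IH; [eapply NoDup_remove_1; eauto|].
        intros i Hi. assert (i <> N) by (intros ->; eapply NoDup_remove_2; eauto).
        assert (i < S N)%nat by (apply Hb, in_or_app; apply in_app_or in Hi; simpl; tauto).
        lia. }
      rewrite sum_list_app in Hle. lra.
    + assert (sum_list F l <= sum_list F (seq 0 N)).
      { apply IH; auto. intros i Hi. assert (i <> N) by congruence. specialize (Hb i Hi). lia. }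
      specialize (HF N). lra.
Qed.

Lemma sum_list_map F (g : nat -> nat) l : sum_list F (map g l) = sum_list (fun i => F (g i)) l.
Proof. induction l; simpl; auto. rewrite IHl; auto. Qed.

Lemma sum_list_ext_in F G l : (forall k, In k l -> F k = G k) -> sum_list F l = sum_list G l.
Proof.
  induction l as [|a t IH]; intros H; simpl; auto.
  rewrite H, IH; simpl; auto. intros; apply H; simpl; auto.
Qed.

Lemma sum_list_filter F (p : nat -> bool) l :
  sum_list F l = sum_list F (filter p l) + sum_list F (filter (fun x => negb (p x)) l).
Proof. induction l as [|a t IH]; simpl; [ring|]. destruct (p a); simpl; rewrite IH; ring. Qed.

Lemma sum_list_pairs (F : nat -> nat -> R) (B : nat -> R) :
  (forall n l, NoDup l -> sum_list (F n) l <= B n) ->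
  forall N l, NoDup l -> (forall k, In k l -> (fst (Cantor.of_nat k) < N)%nat) ->
  sum_list (fun k => F (fst (Cantor.of_nat k)) (snd (Cantor.of_nat k))) l <= sum_list B (seq 0 N).
Proof.
  intros HB N. induction N as [|N IH]; intros l Hnd Hb.
  - destruct l as [|k l]; [simpl; lra|]. specialize (Hb k (or_introl eq_refl)). lia.
  - set (row := fun k => Nat.eqb (fst (Cantor.of_nat k)) N).
    rewrite (sum_list_filter _ row), seq_S, sum_list_app. simpl.
    assert (Hrow : sum_list (fun k => F (fst (Cantor.of_nat k)) (snd (Cantor.of_nat k)))
                     (filter row l) <= B N).
    { replace (sum_list _ (filter row l))
        with (sum_list (F N) (map (fun k => snd (Cantor.of_nat k)) (filter row l))).
      - apply HB, Injective_map_NoDup_in; [|apply NoDup_filter; auto].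
        intros k1 k2 H1 H2 E. apply filter_In in H1 as [_ H1], H2 as [_ H2].
        apply Nat.eqb_eq in H1, H2. apply Cantor.of_nat_inj.
        destruct (Cantor.of_nat k1), (Cantor.of_nat k2). simpl in *. congruence.
      - rewrite sum_list_map. apply sum_list_ext_in. intros k Hk.
        apply filter_In in Hk as [_ Hk]. apply Nat.eqb_eq in Hk. now rewrite Hk. }
    assert (Hrest := IH (filter (fun k => negb (row k)) l) (NoDup_filter _ Hnd)).
    enough (sum_list (fun k => F (fst (Cantor.of_nat k)) (snd (Cantor.of_nat k)))
              (filter (fun k => negb (row k)) l) <= sum_list B (seq 0 N)) by lra.
    apply Hrest. intros k Hk. apply filter_In in Hk as [Hk Hk'].
    unfold row in Hk'. apply negb_true_iff, Nat.eqb_neq in Hk'. specialize (Hb k Hk). lia.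
Qed.

Lemma sum_list_geometric eps N :
  sum_list (fun n => eps * (/2) ^ (S n)) (seq 0 N) = eps * (1 - (/2) ^ N).
Proof.
  induction N as [|N IH]; [simpl; ring|].
  rewrite seq_S, sum_list_app, IH. simpl. field.
Qed.


Lemma In_lt_list_max l i : In i l -> (i < S (list_max l))%nat.
Proof.
  intros Hi. assert (H := proj1 (list_max_le l (list_max l)) (le_n _)).
  rewrite Forall_forall in H. specialize (H i Hi). lia.
Qed.

Definition interval_cover (N : R -> Prop) (a b : nat -> R) : Prop :=
  (forall n, a n <= b n) /\ forall x, N x -> exists n, a n < x < b n.

Lemma null_set_finite_sums N : null_set N <->
  forall eps, 0 < eps -> exists a b, interval_cover N a b /\
    forall l, NoDup l -> sum_list (fun i => b i - a i) l <= eps.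
Proof.
  split.
  - intros H eps Heps. destruct (H eps Heps) as [a [b [H1 [H2 H3]]]].
    exists a, b. split; [split; auto|]. intros l Hl.
    eapply Rle_trans; [apply (sum_list_le_seq _ (S (list_max l)))|]; auto.
    + intro i. specialize (H1 i). lra.
    + intros i. apply In_lt_list_max.
    + rewrite sum_list_seq. auto.
  - intros H eps Heps. destruct (H eps Heps) as [a [b [[H1 H2] H3]]].
    exists a, b. repeat split; auto. intro n. rewrite <- sum_list_seq. apply H3, seq_NoDup.
Qed.

Lemma null_nat_union (Ns : nat -> R -> Prop) : (forall n, null_set (Ns n)) ->
  null_set (fun x => exists n, Ns n x).
Proof.
  intros HS. apply null_set_finite_sums. intros eps Heps.
  assert (Hcov : forall n, exists ab : (nat -> R) * (nat -> R),
     interval_cover (Ns n) (fst ab) (snd ab) /\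
     forall l, NoDup l -> sum_list (fun i => snd ab i - fst ab i) l <= eps * (/2) ^ (S n)).
  { intro n. destruct (proj1 (null_set_finite_sums (Ns n)) (HS n) (eps * (/2) ^ (S n)))
      as [a [b Hab]]; [apply Rmult_lt_0_compat; auto; apply pow_lt; lra|].
    exists (a, b); auto. }
  destruct (choice _ Hcov) as [AB HAB].
  exists (fun k => fst (AB (fst (Cantor.of_nat k))) (snd (Cantor.of_nat k))),
         (fun k => snd (AB (fst (Cantor.of_nat k))) (snd (Cantor.of_nat k))).
  split; [split|].
  - intro k. apply (HAB _).
  - intros x [n Hx]. destruct (proj2 (proj1 (HAB n)) x Hx) as [m Hm].
    exists (Cantor.to_nat (n, m)). rewrite Cantor.cancel_of_to. auto.
  - intros l Hl.
    assert (Hrows := sum_list_pairs (fun n m => snd (AB n) m - fst (AB n) m)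
      (fun n => eps * (/2) ^ (S n)) (fun n => proj2 (HAB n)) (S (list_max
        (map (fun k => fst (Cantor.of_nat k)) l))) l Hl).
    eapply Rle_trans; [apply Hrows|].
    + intros k Hk. apply In_lt_list_max, (in_map (fun k => fst (Cantor.of_nat k))); auto.
    + rewrite sum_list_geometric. assert (0 < (/2) ^ S (list_max
        (map (fun k => fst (Cantor.of_nat k)) l))) by (apply pow_lt; lra). nra.
Qed.

Lemma null_singleton x0 : null_set (fun x => x = x0).
Proof.
  intros eps Heps.
  exists (fun n => match n with O => x0 - eps/4 | _ => 0 end),
         (fun n => match n with O => x0 + eps/4 | _ => 0 end).
  repeat split.
  - intros [|n]; lra.
  - intros x ->. exists 0%nat. lra.
  - intro n. induction n as [|n IH]; simpl in *; lra.
Qed.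

Lemma null_sigma_ideal : sigma_ideal null_set.
Proof.
  split.
  - intros S T H HT eps Heps. destruct (HT eps Heps) as [a [b [H1 [H2 H3]]]].
    exists a, b; repeat split; auto.
  - exact null_nat_union.
  - exact null_singleton.
Qed.

Lemma null_reflect p N : null_set N -> null_set (fun x => N (p - x)).
Proof.
  intros HN eps Heps. destruct (HN eps Heps) as [a [b [H1 [H2 H3]]]].
  exists (fun n => p - b n), (fun n => p - a n). repeat split.
  - intro n; specialize (H1 n); lra.
  - intros x Hx. destruct (H2 _ Hx) as [n Hn]. exists n; lra.
  - intro n. eapply Rle_trans; [|apply (H3 n)]. right. apply sum_eq. intros; ring.
Qed.

Lemma finite_cover_length (a b : nat -> R) : (forall n, a n <= b n) ->
  forall l c d, NoDup l -> c <= d ->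
  (forall t, c <= t <= d -> exists i, In i l /\ a i < t < b i) ->
  sum_list (fun i => b i - a i) l > d - c.
Proof.
  intros Hab l. remember (length l) as m. revert l Heqm.
  induction m as [m IH] using (well_founded_induction Wf_nat.lt_wf).
  intros l Hm c d Hnd Hcd Hcov.
  destruct (Hcov c ltac:(lra)) as [i [Hi Hci]].
  apply in_split in Hi as [l1 [l2 ->]].
  rewrite !sum_list_app in *. simpl.
  assert (Hpos : 0 <= sum_list (fun i => b i - a i) (l1 ++ l2))
    by (apply sum_list_nonneg; intro j; specialize (Hab j); lra).
  rewrite sum_list_app in Hpos.
  destruct (Rlt_dec d (b i)) as [Hd|Hd]; [lra|].
  assert (Hrest : sum_list (fun i => b i - a i) (l1 ++ l2) > d - b i).
  { apply (IH (length (l1 ++ l2))); auto.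
    - subst m. rewrite !length_app. simpl. lia.
    - eapply NoDup_remove_1; eauto.
    - lra.
    - intros t Ht. destruct (Hcov t ltac:(lra)) as [j [Hj Htj]].
      exists j. split; auto. apply in_app_or in Hj as [Hj|[<-|Hj]]; auto using in_or_app.
      lra. }
  rewrite sum_list_app in Hrest. lra.
Qed.

(* Heine-Borel for [0, 1], by the least upper bound of the finitely covered initial segments. *)
Lemma unit_interval_finite_subcover (a b : nat -> R) : (forall t, exists n, a n < t < b n) ->
  exists N, forall t, 0 <= t <= 1 -> exists n, (n <= N)%nat /\ a n < t < b n.
Proof.
  intros Hcov.
  set (T := fun t => 0 <= t <= 1 /\ exists N, forall s, 0 <= s <= t ->
              exists n, (n <= N)%nat /\ a n < s < b n).
  assert (T0 : T 0).
  { split; [lra|]. destruct (Hcov 0) as [n0 Hn0]. exists n0. intros s Hs.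
    replace s with 0 by lra. exists n0; split; auto. }
  assert (Tb : bound T) by (exists 1; intros t [Ht _]; lra).
  destruct (completeness T Tb (ex_intro _ 0 T0)) as [m [Hub Hlub]].
  assert (Hm0 : 0 <= m) by (apply Hub; auto).
  assert (Hm1 : m <= 1) by (apply Hlub; intros t [Ht _]; lra).
  destruct (Hcov m) as [k Hk].
  assert (Ht : exists t, T t /\ a k < t).
  { apply NNPP. intro Hn. assert (m <= a k); [|lra].
    apply Hlub. intros t Tt. apply Rnot_lt_le. intro. apply Hn. eauto. }
  destruct Ht as [t [[Ht01 [N HN]] Hta]].
  assert (Hext : forall s, 0 <= s <= 1 -> s < b k ->
            exists n, (n <= Nat.max N k)%nat /\ a n < s < b n).
  { intros s Hs Hsb. destruct (Rle_dec s t) as [Hst|Hst].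
    - destruct (HN s ltac:(lra)) as [n [Hn1 Hn2]]. exists n; split; auto; lia.
    - exists k. split; [lia|lra]. }
  destruct (Rlt_dec 1 (b k)) as [H1|H1].
  - exists (Nat.max N k). intros s Hs. apply Hext; auto; lra.
  - exfalso. set (u := (m + b k) / 2).
    assert (Tu : T u).
    { split; [unfold u; lra|]. exists (Nat.max N k). intros s Hs. apply Hext; unfold u in *; lra. }
    assert (u <= m) by (apply Hub; auto). unfold u in *; lra.
Qed.

Lemma R_not_null : ~ null_set (fun _ => True).
Proof.
  intro H. destruct (H (/2) ltac:(lra)) as [a [b [H1 [H2 H3]]]].
  destruct (unit_interval_finite_subcover a b) as [N HN]; [intro t; apply H2; auto|].
  specialize (H3 N). rewrite <- sum_list_seq in H3.
  assert (sum_list (fun i => b i - a i) (seq 0 (S N)) > 1 - 0); [|lra].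
  apply finite_cover_length; auto using seq_NoDup; [lra|].
  intros t Ht. destruct (HN t Ht) as [n [Hn1 Hn2]]. exists n. split; auto.
  apply in_seq. lia.
Qed.

Lemma nowhere_dense_sub S T : (forall x, S x -> T x) -> nowhere_dense T -> nowhere_dense S.
Proof.
  intros H HT a b Hab. destruct (HT a b Hab) as [x [Hx Hc]].
  exists x; split; auto. intro C; apply Hc.
  intros eps Heps. destruct (C eps Heps) as [y [Sy Hy]]. eauto.
Qed.

Lemma nowhere_dense_singleton x0 : nowhere_dense (fun x => x = x0).
Proof.
  intros a b Hab.
  assert (Hx : exists x, a < x < b /\ x <> x0).
  { destruct (Req_dec ((a + b) / 2) x0) as [E|E].
    - exists ((a + (a + b) / 2) / 2). split; [lra|]. intro; lra.
    - exists ((a + b) / 2); split; [lra|auto]. }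
  destruct Hx as [x [Hx Ne]]. exists x; split; auto.
  intro C. destruct (C (Rabs (x - x0))) as [y [-> Hy]]; [apply Rabs_pos_lt; lra|].
  rewrite <- Rabs_Ropp in Hy. replace (- (x0 - x)) with (x - x0) in Hy by ring. lra.
Qed.

Lemma meager_sigma_ideal : sigma_ideal meager.
Proof.
  split.
  - intros S T H [N [HN HC]]. exists N; split; auto.
  - intros M HM.
    destruct (choice (fun n N => (forall k, nowhere_dense (N k)) /\
                                   forall x, M n x -> exists k, N k x) HM) as [NN HNN].
    exists (fun j => NN (fst (Cantor.of_nat j)) (snd (Cantor.of_nat j))). split.
    + intro j. apply (HNN _).
    + intros x [n Hx]. destruct (proj2 (HNN n) x Hx) as [k Hk].
      exists (Cantor.to_nat (n, k)). rewrite Cantor.cancel_of_to. auto.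
  - intros x0. exists (fun _ x => x = x0). split; [intro; apply nowhere_dense_singleton|].
    exists 0%nat; auto.
Qed.

Lemma nowhere_dense_avoid_interval N : nowhere_dense N -> forall a b, a < b ->
  exists a' b', a < a' /\ a' < b' /\ b' < b /\ forall y, a' <= y <= b' -> ~ N y.
Proof.
  intros HN a b Hab. destruct (HN a b Hab) as [x [Hx Hc]].
  assert (He : exists eps, 0 < eps /\ forall y, N y -> ~ Rabs (y - x) < eps).
  { apply NNPP. intro H. apply Hc. intros eps Heps. apply NNPP. intro H2.
    apply H. exists eps. split; auto. intros y Ny Hy. apply H2. exists y; auto. }
  destruct He as [eps [Heps He]].
  set (r := Rmin eps (Rmin (x - a) (b - x)) / 2).
  assert (Hr1 : Rmin eps (Rmin (x - a) (b - x)) <= eps) by apply Rmin_l.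
  assert (Hr2 : Rmin eps (Rmin (x - a) (b - x)) <= x - a)
    by (eapply Rle_trans; [apply Rmin_r | apply Rmin_l]).
  assert (Hr3 : Rmin eps (Rmin (x - a) (b - x)) <= b - x)
    by (eapply Rle_trans; [apply Rmin_r | apply Rmin_r]).
  assert (Hr0 : 0 < Rmin eps (Rmin (x - a) (b - x)))
    by (apply Rmin_glb_lt; auto; apply Rmin_glb_lt; lra).
  exists (x - r), (x + r). unfold r. repeat split; try lra.
  intros y Hy Ny. apply (He y Ny). apply Rabs_def1; lra.
Qed.

Lemma nested_intervals (I : nat -> R * R) : (forall n, fst (I n) <= snd (I n)) ->
  (forall n, fst (I n) <= fst (I (S n)) /\ snd (I (S n)) <= snd (I n)) ->
  exists x, forall n, fst (I n) <= x <= snd (I n).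
Proof.
  intros Hle Hstep.
  assert (Hmon : forall n k, fst (I n) <= fst (I (n + k)%nat) /\ snd (I (n + k)%nat) <= snd (I n)).
  { intros n k. induction k as [|k IH]; [rewrite Nat.add_0_r; lra|].
    rewrite Nat.add_succ_r. destruct (Hstep (n + k)%nat). lra. }
  assert (Hab : forall n m, fst (I n) <= snd (I m)).
  { intros n m. destruct (Nat.le_ge_cases n m) as [Hnm|Hnm].
    - destruct (Hmon n (m - n)%nat) as [A1 A2].
      replace (n + (m - n))%nat with m in A1, A2 by lia. specialize (Hle m). lra.
    - destruct (Hmon m (n - m)%nat) as [A1 A2].
      replace (m + (n - m))%nat with n in A1, A2 by lia. specialize (Hle n). lra. }
  set (E := fun y => exists n, y = fst (I n)).
  assert (Eb : bound E) by (exists (snd (I 0%nat)); intros y [n ->]; apply Hab).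
  destruct (completeness E Eb (ex_intro _ _ (ex_intro _ 0%nat eq_refl))) as [x [Hub Hlub]].
  exists x. intro n. split.
  - apply Hub. exists n; auto.
  - apply Hlub. intros y [m ->]. apply Hab.
Qed.

Lemma R_not_meager : ~ meager (fun _ => True).
Proof.
  intros [N [HN HC]].
  assert (Hshrink : forall np : nat * (R * R), exists J : R * R,
     fst (snd np) < snd (snd np) ->
     fst (snd np) < fst J /\ fst J < snd J /\ snd J < snd (snd np) /\
     forall y, fst J <= y <= snd J -> ~ N (fst np) y).
  { intros [n [a b]]. simpl. destruct (Rlt_dec a b) as [H|H].
    - destruct (nowhere_dense_avoid_interval (N n) (HN n) a b H) as [a' [b' Hab]].
      exists (a', b'); auto.
    - exists (0, 0); intro; contradiction. }
  destruct (choice _ Hshrink) as [shrink Hs].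
  set (I := fix I n := match n with O => (0, 1) | S m => shrink (m, I m) end).
  assert (Hlt : forall n, fst (I n) < snd (I n)).
  { induction n as [|n IH]; simpl; [lra|]. apply (Hs (n, I n)); auto. }
  assert (Hstep : forall n, fst (I n) < fst (I (S n)) /\ snd (I (S n)) < snd (I n) /\
            forall y, fst (I (S n)) <= y <= snd (I (S n)) -> ~ N n y)
    by (intro n; destruct (Hs (n, I n) (Hlt n)) as [H1 [_ H3]]; exact (conj H1 H3)).
  destruct (nested_intervals I) as [x Hx].
  - intro n. specialize (Hlt n). lra.
  - intro n. destruct (Hstep n) as [H1 [H2 _]]. lra.
  - destruct (HC x Logic.I) as [n Hn]. now apply (proj2 (proj2 (Hstep n)) x (Hx (S n))).
Qed.

Lemma R_not_countable : ~ countable (fun _ : R => True).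
Proof. intro H. apply R_not_meager, (ideal_countable _ meager_sigma_ideal), H. Qed.

Definition rat_interval (k : nat) (x : R) : Prop :=
  qenum (fst (Cantor.of_nat k)) < x < qenum (snd (Cantor.of_nat k)).

Lemma rat_interval_small x eps : 0 < eps ->
  exists k, rat_interval k x /\ forall y, rat_interval k y -> Rabs (y - x) < eps.
Proof.
  intros He.
  destruct (qenum_dense (x - eps) x ltac:(lra)) as [i Hi].
  destruct (qenum_dense x (x + eps) ltac:(lra)) as [j Hj].
  exists (Cantor.to_nat (i, j)). unfold rat_interval. rewrite Cantor.cancel_of_to. simpl.
  split; [lra|]. intros y Hy. apply Rabs_def1; lra.
Qed.

Lemma rat_interval_open k x : rat_interval k x ->
  exists eps, 0 < eps /\ forall y, Rabs (y - x) < eps -> rat_interval k y.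
Proof.
  unfold rat_interval. set (a := qenum _). set (b := qenum _). intros H.
  exists (Rmin (x - a) (b - x)). split; [apply Rmin_glb_lt; lra|].
  intros y Hy. assert (H1 := Rmin_l (x - a) (b - x)). assert (H2 := Rmin_r (x - a) (b - x)).
  apply Rabs_def2 in Hy. lra.
Qed.

Inductive borel_code : Type :=
  | BOpen : (nat -> bool) -> borel_code
  | BCompl : borel_code -> borel_code
  | BUnion : (nat -> borel_code) -> borel_code.

Fixpoint borel_interp (c : borel_code) : R -> Prop :=
  match c with
  | BOpen b => fun x => exists k, b k = true /\ rat_interval k x
  | BCompl c' => fun x => ~ borel_interp c' x
  | BUnion cs => fun x => exists n, borel_interp (cs n) x
  end.

Lemma borel_has_code B : borel B -> exists c, forall x, borel_interp c x <-> B x.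
Proof.
  induction 1 as [U HU | S HS IH | Sn HSn IH | S T HS IH HST].
  - exists (BOpen (fun k => if excluded_middle_informative
                                (forall y, rat_interval k y -> U y) then true else false)).
    intro x. simpl. split.
    + intros [k [Hk Hx]]. destruct excluded_middle_informative; [auto|discriminate].
    + intro Ux. destruct (HU x Ux) as [eps [He Hball]].
      destruct (rat_interval_small x eps He) as [k [Hk Hk']]. exists k. split; auto.
      destruct excluded_middle_informative as [_|n]; [reflexivity|].
      exfalso; apply n. intros y Hy. apply Hball, Hk', Hy.
  - destruct IH as [c Hc]. exists (BCompl c). intro x. simpl. specialize (Hc x). tauto.
  - destruct (choice _ IH) as [cs Hcs]. exists (BUnion cs). intro x. simpl.
    split; intros [n Hn]; exists n; apply Hcs; auto.
  - destruct IH as [c Hc]. exists c. intro x. rewrite Hc. auto.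
Qed.

(* A Borel code is a well-founded tree; it is determined by its node labels along all paths. *)
Fixpoint code_label (c : borel_code) (path : list nat) : nat :=
  match c, path with
  | BOpen b, nil => 0%nat
  | BOpen b, n :: _ => if b n then 1%nat else 0%nat
  | BCompl _, nil => 1%nat
  | BCompl c', _ :: path' => code_label c' path'
  | BUnion _, nil => 2%nat
  | BUnion cs, n :: path' => code_label (cs n) path'
  end.

Lemma code_label_inj c c' : (forall l, code_label c l = code_label c' l) -> c = c'.
Proof.
  revert c'.
  induction c as [b | c IH | cs IH]; intros [b' | c' | cs'] H;
    try (specialize (H nil); simpl in H; discriminate).
  - f_equal. apply functional_extensionality. intro n. specialize (H (n :: nil)). simpl in H.
    destruct (b n), (b' n); auto; discriminate.
  - f_equal. apply IH. intro l. apply (H (0%nat :: l)).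
  - f_equal. apply functional_extensionality. intro n. apply IH. intro l. apply (H (n :: l)).
Qed.

Definition decode_list (n : nat) : list nat :=
  epsilon (inhabits nil) (fun l => code_list l = n).

Lemma decode_code_list l : decode_list (code_list l) = l.
Proof.
  apply code_list_inj.
  exact (epsilon_spec (inhabits nil) (fun l' => code_list l' = code_list l) (ex_intro _ l eq_refl)).
Qed.

Definition borel_code_seq (c : borel_code) : nat -> R :=
  fun n => INR (code_label c (decode_list n)).

Lemma borel_code_seq_inj c c' : borel_code_seq c = borel_code_seq c' -> c = c'.
Proof.
  intros E. apply code_label_inj. intro l.
  apply (f_equal (fun f => f (code_list l))) in E. unfold borel_code_seq in E.
  rewrite decode_code_list in E. apply INR_eq; auto.
Qed.

Definition borel_of_seq (s : nat -> R) : R -> Prop :=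
  borel_interp (epsilon (inhabits (BOpen (fun _ => false))) (fun c => borel_code_seq c = s)).

Lemma borel_of_seq_onto B : borel B -> exists s, forall x, borel_of_seq s x <-> B x.
Proof.
  intros HB. destruct (borel_has_code B HB) as [c Hc]. exists (borel_code_seq c).
  unfold borel_of_seq.
  rewrite (borel_code_seq_inj _ c (epsilon_spec (inhabits (BOpen (fun _ => false)))
    (fun c' => borel_code_seq c' = borel_code_seq c) (ex_intro _ c eq_refl))).
  auto.
Qed.

(* [s] selects, for each [n], rational intervals whose union has the closed complement
   [closed_of_seq s n]; the nowhere dense ones among these are collected. *)
Definition closed_of_seq (s : nat -> R) (n : nat) : R -> Prop :=
  fun x => ~ exists k, s (Cantor.to_nat (n, k)) = 1 /\ rat_interval k x.

Definition meager_of_seq (s : nat -> R) : R -> Prop :=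
  fun x => exists n, nowhere_dense (closed_of_seq s n) /\ closed_of_seq s n x.

Lemma meager_of_seq_meager s : meager (meager_of_seq s).
Proof.
  exists (fun n x => nowhere_dense (closed_of_seq s n) /\ closed_of_seq s n x). split.
  - intro n. destruct (classic (nowhere_dense (closed_of_seq s n))) as [H|H].
    + apply nowhere_dense_sub with (T := closed_of_seq s n); auto. intros x [_ Hx]; auto.
    + apply nowhere_dense_sub with (T := fun x => x = 0); [|apply nowhere_dense_singleton].
      intros x [Hx _]; contradiction.
  - intros x Hx; exact Hx.
Qed.

Lemma meager_of_seq_cofinal M : meager M -> exists s, forall x, M x -> meager_of_seq s x.
Proof.
  intros [N [HN HC]].
  set (avoids := fun n k => forall y, rat_interval k y -> ~ closure (N n) y).
  exists (fun j => let (n, k) := Cantor.of_nat j in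
                   if excluded_middle_informative (avoids n k) then 1 else 0).
  assert (Hs : forall n k, (let (n, k) := Cantor.of_nat (Cantor.to_nat (n, k)) in
                   if excluded_middle_informative (avoids n k) then 1 else 0) = 1 <-> avoids n k).
  { intros n k. rewrite Cantor.cancel_of_to.
    destruct excluded_middle_informative; split; auto; intro; try contradiction; lra. }
  intros x Mx. destruct (HC x Mx) as [n Hn]. exists n. split.
  - intros a b Hab. destruct (HN n a b Hab) as [x0 [Hx0 Hc]].
    assert (He : exists eps, 0 < eps /\ forall y, N n y -> ~ Rabs (y - x0) < eps).
    { apply NNPP. intro H. apply Hc. intros eps Heps. apply NNPP. intro H2.
      apply H. exists eps. split; auto. intros y Ny Hy. apply H2. exists y; auto. }
    destruct He as [eps [Heps He]].
    destruct (rat_interval_small x0 (eps/2) ltac:(lra)) as [k [Hk Hk']].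
    exists x0. split; auto. intro Hcl.
    destruct (rat_interval_open k x0 Hk) as [e2 [He2 Hball]].
    destruct (Hcl e2 He2) as [z [Fz Hz]]. apply Fz. exists k. split; [|apply Hball; auto].
    apply Hs. intros y Hy Cy. destruct (Cy (eps/2) ltac:(lra)) as [w [Nw Hw]].
    apply (He w Nw). specialize (Hk' y Hy).
    replace (w - x0) with ((w - y) + (y - x0)) by ring.
    eapply Rle_lt_trans; [apply Rabs_triang|]. lra.
  - intros [k [Hk Hx]]. apply (proj1 (Hs n k) Hk x Hx).
    intros eps Heps. exists x. split; auto. replace (x - x) with 0 by ring. rewrite Rabs_R0; auto.
Qed.

(* [s] lists, for every [m], the endpoints of a cover of total length at most 1/(m+1). *)
Definition cover_left (s : nat -> R) (m i : nat) : R :=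
  s (Cantor.to_nat (m, Cantor.to_nat (0%nat, i))).
Definition cover_right (s : nat -> R) (m i : nat) : R :=
  s (Cantor.to_nat (m, Cantor.to_nat (1%nat, i))).

Definition null_code (s : nat -> R) : Prop :=
  forall m, (forall i, cover_left s m i <= cover_right s m i) /\
    forall n, sum_f_R0 (fun i => cover_right s m i - cover_left s m i) n <= / INR (S m).

Definition null_of_seq (s : nat -> R) : R -> Prop :=
  fun x => null_code s /\ forall m, exists i, cover_left s m i < x < cover_right s m i.

Lemma null_of_seq_null s : null_set (null_of_seq s).
Proof.
  destruct (classic (null_code s)) as [V|V].
  - intros eps Heps. destruct (archimed_cor1 eps Heps) as [m [Hm Hm0]].
    exists (cover_left s (pred m)), (cover_right s (pred m)). repeat split.
    + apply (V _).
    + intros x [_ Hx]. apply Hx.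
    + intro n. eapply Rle_trans; [apply (V _)|]. rewrite Nat.succ_pred_pos by lia. lra.
  - apply (ideal_sub _ null_sigma_ideal) with (T := fun x => x = 0);
      [|apply null_singleton]. intros x [Hx _]; contradiction.
Qed.

Lemma null_of_seq_cofinal N : null_set N -> exists s, forall x, N x -> null_of_seq s x.
Proof.
  intros HN.
  assert (H : forall m : nat, exists ab : (nat -> R) * (nat -> R),
    (forall i, fst ab i <= snd ab i) /\ (forall x, N x -> exists i, fst ab i < x < snd ab i) /\
    (forall n, sum_f_R0 (fun i => snd ab i - fst ab i) n <= / INR (S m))).
  { intro m. destruct (HN (/ INR (S m))) as [a [b Hab]].
    - apply Rinv_0_lt_compat, lt_0_INR; lia.
    - exists (a, b); auto. }
  destruct (choice _ H) as [AB HAB].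
  set (s := fun j => let (m, r) := Cantor.of_nat j in let (t, i) := Cantor.of_nat r in
            if Nat.eqb t 0 then fst (AB m) i else snd (AB m) i).
  assert (Eleft : forall m, cover_left s m = fst (AB m)).
  { intro m. apply functional_extensionality. intro i.
    unfold cover_left, s. now rewrite !Cantor.cancel_of_to. }
  assert (Eright : forall m, cover_right s m = snd (AB m)).
  { intro m. apply functional_extensionality. intro i.
    unfold cover_right, s. now rewrite !Cantor.cancel_of_to. }
  exists s. intros x Nx. split; intro m; rewrite Eleft, Eright;
    destruct (HAB m) as [H1 [H2 H3]]; auto.
Qed.

(* Under CH, the initial segment below the first point with an uncountable initial segment
   is equinumerous with R; transporting the well-order along this bijection gives an order
   of type omega_1 on R. *)
Lemma CH_omega1_order : CH -> exists lt : R -> R -> Prop,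
  well_founded lt /\ (forall a b c, lt a b -> lt b c -> lt a c) /\
  (forall a b, a <> b -> lt a b \/ lt b a) /\ (forall a, countable (fun b => lt b a)).
Proof.
  intro HCH. destruct WellOrder.R_well_order as [W [Hmin Hanti]].
  assert (Htot : forall x y, W x y \/ W y x).
  { intros x y. destruct (Hmin (fun z => z = x \/ z = y) (ex_intro _ x (or_introl eq_refl)))
      as [m [[-> | ->] Hm]]; [left|right]; apply Hm; auto. }
  assert (Htrans : forall x y z, W x y -> W y z -> W x z).
  { intros x y z Hxy Hyz.
    destruct (Hmin (fun w => w = x \/ w = y \/ w = z) (ex_intro _ x (or_introl eq_refl)))
      as [m [[-> | [-> | ->]] Hm]].
    - apply Hm; tauto.
    - rewrite (Hanti x y Hxy (Hm x (or_introl eq_refl))). exact Hyz.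
    - rewrite <- (Hanti y z Hyz (Hm y (or_intror (or_introl eq_refl)))). exact Hxy. }
  set (lt := fun x y => W x y /\ x <> y).
  assert (Hwf : well_founded lt).
  { intro x. apply NNPP. intro Hx.
    destruct (Hmin (fun y => ~ Acc lt y) (ex_intro _ x Hx)) as [m [Hm Hmm]].
    apply Hm. constructor. intros y [Wy Ne]. apply NNPP. intro Hy.
    apply Ne. apply Hanti; auto. }
  assert (Hlt_trans : forall a b c, lt a b -> lt b c -> lt a c).
  { intros a b c [H1 N1] [H2 N2]. split; [eauto|].
    intros <-. apply N1. apply Hanti; auto. }
  assert (Hlt_tot : forall a b, a <> b -> lt a b \/ lt b a).
  { intros a b Ne. destruct (Htot a b); [left|right]; split; auto. }
  destruct (classic (forall x, countable (fun y => lt y x))) as [Hall|Hex].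
  { exists lt. auto. }
  apply not_all_ex_not in Hex.
  destruct (Hmin (fun x => ~ countable (fun y => lt y x)) Hex) as [x0 [Hx0 Hleast]].
  destruct (HCH (fun y => lt y x0)) as [Hc | [phi [Hphi [Hinj _]]]]; [contradiction|].
  exists (fun a b => lt (phi a) (phi b)). split; [|split; [|split]].
  - apply wf_inverse_image; auto.
  - intros a b c; apply Hlt_trans.
  - intros a b Ne. apply Hlt_tot. intro E; apply Ne; auto.
  - intro a. assert (Hseg : countable (fun y => lt y (phi a))).
    { apply NNPP. intro Hn. destruct (Hphi a) as [_ Ne].
      apply Ne, Hanti; [apply Hphi | apply Hleast, Hn]. }
    apply (countable_preimage _ _ phi Hseg); auto.
Qed.

Definition monotone (side : bool) (f : R -> R) : Prop :=
  if side then strictly_decreasing f else strictly_increasing f.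

Definition small (side : bool) : (R -> Prop) -> Prop := if side then null_set else meager.

Lemma small_sigma_ideal side : sigma_ideal (small side).
Proof. destruct side; [exact null_sigma_ideal | exact meager_sigma_ideal]. Qed.

Lemma R_not_small side : ~ small side (fun _ => True).
Proof. destruct side; [exact R_not_null | exact R_not_meager]. Qed.

Lemma monotone_graphs_meet_once side f g : monotone side f -> monotone (negb side) g ->
  forall x y, f x = g x -> f y = g y -> x = y.
Proof.
  intros Hf Hg x y Hx Hy.
  destruct (Rtotal_order x y) as [H|[H|H]]; auto; exfalso;
    destruct side; simpl in *; specialize (Hf _ _ H); specialize (Hg _ _ H); lra.
Qed.

Definition small_of_seq (side : bool) (s : nat -> R) : R -> Prop :=
  if side then null_of_seq s else meager_of_seq s.

Lemma small_of_seq_small side s : small side (small_of_seq side s).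
Proof. destruct side; [apply null_of_seq_null | apply meager_of_seq_meager]. Qed.

Lemma small_of_seq_cofinal side M : small side M ->
  exists s, forall x, M x -> small_of_seq side s x.
Proof. destruct side; [apply null_of_seq_cofinal | apply meager_of_seq_cofinal]. Qed.

Definition qvalues (f : R -> R) : nat -> R := fun n => f (qenum n).

Definition decodes_to (side : bool) (s : nat -> R) (f : R -> R) : Prop :=
  monotone side f /\
  ((exists g, monotone side g /\ continuity g /\ qvalues g = s) -> continuity f /\ qvalues f = s).

Definition fun_of_seq (side : bool) (s : nat -> R) : R -> R :=
  epsilon (inhabits (fun x => x)) (decodes_to side s).

Lemma fun_of_seq_spec side s : decodes_to side s (fun_of_seq side s).
Proof.
  unfold fun_of_seq. apply epsilon_spec.
  destruct (classic (exists g, monotone side g /\ continuity g /\ qvalues g = s))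
    as [[g Hg]|Hn].
  - exists g. split; [apply Hg|]. intros _; split; apply Hg.
  - exists (fun x => if side then - x else x). split; [|intro; contradiction].
    destruct side; intros x y H; lra.
Qed.

Lemma fun_of_seq_monotone side s : monotone side (fun_of_seq side s).
Proof. apply fun_of_seq_spec. Qed.

Lemma fun_of_seq_qvalues side f : monotone side f -> continuity f ->
  fun_of_seq side (qvalues f) = f.
Proof.
  intros Hm Hc. destruct (fun_of_seq_spec side (qvalues f)) as [_ H].
  destruct H as [H1 H2]; [exists f; auto|].
  apply continuous_eq_on_qenum; auto. intro n. exact (f_equal (fun s => s n) H2).
Qed.

(* [task_kind = Some side]: put a new point on the graph of [task_fun side] inside the
   Borel set coded by [task_borel]; [task_kind = None]: make [task_target] a combination. *)
Record task : Type := Task {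
  task_kind : option bool;
  task_fun : bool -> nat -> R;
  task_small : bool -> nat -> R;
  task_borel : nat -> R;
  task_target : R2 }.

Definition kind_to_real (k : option bool) : R :=
  match k with Some false => 0 | Some true => 1 | None => 2 end.

Definition kind_of_real (x : R) : option bool :=
  if Req_EM_T x 0 then Some false else if Req_EM_T x 1 then Some true else None.

Lemma kind_of_to_real k : kind_of_real (kind_to_real k) = k.
Proof.
  unfold kind_of_real. destruct k as [[]|]; simpl;
    repeat destruct Req_EM_T; auto; lra.
Qed.

(* The extra real [r] fills a padding slot: every task has continuum many codes. *)
Definition task_slot (t : task) (r : R) (j k : nat) : R :=
  match j with
  | 0%nat => kind_to_real (task_kind t)
  | 1%nat => task_fun t false k
  | 2%nat => task_fun t true k
  | 3%nat => task_small t false k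
  | 4%nat => task_small t true k
  | 5%nat => task_borel t k
  | 6%nat => if Nat.eqb k 0 then fst (task_target t) else snd (task_target t)
  | _ => r
  end.

Definition encode_task (t : task) (r : R) : R :=
  encode_seq (fun n => let (j, k) := Cantor.of_nat n in task_slot t r j k).

Lemma decode_encode_slot t r j k :
  decode_seq (encode_task t r) (Cantor.to_nat (j, k)) = task_slot t r j k.
Proof. unfold encode_task. now rewrite decode_encode_seq, Cantor.cancel_of_to. Qed.

Definition decode_task (a : R) : task :=
  let c j k := decode_seq a (Cantor.to_nat (j, k)) in
  Task (kind_of_real (c 0%nat 0%nat))
    (fun side => c (if side then 2%nat else 1%nat))
    (fun side => c (if side then 4%nat else 3%nat))
    (c 5%nat) (c 6%nat 0%nat, c 6%nat 1%nat).

Lemma decode_encode_task t r : decode_task (encode_task t r) = t.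
Proof.
  destruct t as [k F Sm B [v1 v2]]. unfold decode_task. cbv zeta. f_equal.
  - rewrite decode_encode_slot. apply kind_of_to_real.
  - apply functional_extensionality. intros []; apply functional_extensionality; intro n;
      apply decode_encode_slot.
  - apply functional_extensionality. intros []; apply functional_extensionality; intro n;
      apply decode_encode_slot.
  - apply functional_extensionality. intro n. apply decode_encode_slot.
  - now rewrite !decode_encode_slot.
Qed.

Lemma task_codes_not_countable t : ~ countable (fun a => decode_task a = t).
Proof.
  intros H. apply R_not_countable.
  apply (countable_preimage _ _ (encode_task t) H).
  - intros r _. apply decode_encode_task.
  - intros r r' _ _ E. apply (f_equal (fun a => decode_seq a (Cantor.to_nat (7%nat, 0%nat)))) in E.
    now rewrite !decode_encode_slot in E.
Qed.

Definition pick (Q : R -> Prop) : option R :=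
  match excluded_middle_informative (exists x, Q x) with
  | left H => Some (proj1_sig (constructive_indefinite_description _ H))
  | right _ => None
  end.

Lemma pick_some Q x : pick Q = Some x -> Q x.
Proof.
  unfold pick. destruct excluded_middle_informative as [H|H]; [|discriminate].
  intro E; injection E as <-. apply proj2_sig.
Qed.

Lemma pick_exists Q : (exists x, Q x) -> exists x, pick Q = Some x.
Proof. intros H. unfold pick. destruct excluded_middle_informative; [eauto|contradiction]. Qed.

Section Construction.

Variable lt : R -> R -> Prop.
Hypothesis lt_wf : well_founded lt.
Hypothesis lt_trans : forall a b c, lt a b -> lt b c -> lt a c.
Hypothesis lt_total : forall a b, a <> b -> lt a b \/ lt b a.
Hypothesis lt_countable : forall a, countable (fun b => lt b a).

Definition graph_fun (side : bool) (a : R) : R -> R :=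
  fun_of_seq side (task_fun (decode_task a) side).

Definition small_set (side : bool) (a : R) : R -> Prop :=
  small_of_seq side (task_small (decode_task a) side).

Definition target (a : R) : R2 := task_target (decode_task a).

Definition avoids (a : R) (p : R2) : Prop :=
  forall c side, lt c a -> ~ (small_set side c (fst p) /\ graph_fun side c (fst p) = snd p).

Definition graph_candidate (a : R) (P : R2 -> Prop) (side : bool) (x : R) : Prop :=
  borel_of_seq (task_borel (decode_task a)) x /\ avoids a (x, graph_fun side a x) /\
  ~ span P (x, graph_fun side a x).

Definition complement_point (a : R) (x : R) : R2 := (fst (target a) - x, snd (target a) + x).

Definition span_candidate (a : R) (P : R2 -> Prop) (x : R) : Prop :=
  avoids a (x, - x) /\ avoids a (complement_point a x) /\ ~ span P (x, - x) /\
  ~ span (fun p => P p \/ p = (x, - x)) (complement_point a x).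

Definition stage (a : R) (P : R2 -> Prop) : option R2 * option R2 :=
  match task_kind (decode_task a) with
  | Some side =>
      match pick (graph_candidate a P side) with
      | Some x => (Some (x, graph_fun side a x), None)
      | None => (None, None)
      end
  | None =>
      if excluded_middle_informative (span P (target a)) then (None, None) else
      match pick (span_candidate a P) with
      | Some x => (Some (x, - x), Some (complement_point a x))
      | None => (None, None)
      end
  end.

Definition output : R -> option R2 * option R2 :=
  Fix lt_wf (fun _ => (option R2 * option R2)%type)
    (fun a rec => stage a (fun p => exists b (h : lt b a),
                             fst (rec b h) = Some p \/ snd (rec b h) = Some p)).

Definition added (a : R) (p : R2) : Prop := fst (output a) = Some p \/ snd (output a) = Some p.

Definition earlier (a : R) (p : R2) : Prop := exists b, lt b a /\ added b p.

Definition basis (p : R2) : Prop := exists a, added a p.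

Lemma output_eq a : output a = stage a (earlier a).
Proof.
  unfold output at 1. rewrite Fix_eq.
  - f_equal. apply functional_extensionality. intro p. apply propositional_extensionality.
    split; [intros [b [h H]] | intros [b [h H]]]; exists b; eauto.
  - intros x f g Hfg. f_equal. apply functional_extensionality. intro p.
    apply propositional_extensionality.
    split; intros [b [h H]]; exists b, h; rewrite ?Hfg in *; auto.
Qed.

Lemma output_cases a :
  output a = (None, None) \/
  (exists side x, output a = (Some (x, graph_fun side a x), None) /\
                  graph_candidate a (earlier a) side x) \/
  (exists x, output a = (Some (x, - x), Some (complement_point a x)) /\
             span_candidate a (earlier a) x).
Proof.
  rewrite output_eq. unfold stage.
  destruct (task_kind (decode_task a)) as [side|].
  - destruct (pick _) as [x|] eqn:Ep; auto. apply pick_some in Ep. right; left; eauto.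
  - destruct excluded_middle_informative; auto.
    destruct (pick _) as [x|] eqn:Ep; auto. apply pick_some in Ep. right; right; eauto.
Qed.

Lemma added_avoids a p : added a p -> avoids a p.
Proof.
  unfold added. destruct (output_cases a) as [E|[[side [x [E G]]]|[x [E G]]]]; rewrite E;
    simpl; intros [H|H]; try discriminate; injection H as <-; apply G.
Qed.

Lemma output_graph a side : task_kind (decode_task a) = Some side ->
  (exists x, graph_candidate a (earlier a) side x) ->
  exists x, fst (output a) = Some (x, graph_fun side a x) /\ graph_candidate a (earlier a) side x.
Proof.
  intros Hk Hx. rewrite output_eq. unfold stage. rewrite Hk.
  destruct (pick_exists _ Hx) as [x Ex]. rewrite Ex. exists x. split; auto. now apply pick_some.
Qed.

Lemma output_span a : task_kind (decode_task a) = None -> ~ span (earlier a) (target a) ->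
  (exists x, span_candidate a (earlier a) x) ->
  exists x, output a = (Some (x, - x), Some (complement_point a x)).
Proof.
  intros Hk Hs Hx. rewrite output_eq. unfold stage. rewrite Hk.
  destruct excluded_middle_informative; [contradiction|].
  destruct (pick_exists _ Hx) as [x Ex]. rewrite Ex. eauto.
Qed.

Definition point (k : R * bool) : option R2 :=
  if snd k then snd (output (fst k)) else fst (output (fst k)).

Definition key_lt (k1 k2 : R * bool) : Prop :=
  lt (fst k1) (fst k2) \/ (fst k1 = fst k2 /\ snd k1 = false /\ snd k2 = true).

Lemma key_lt_total k1 k2 : k1 <> k2 -> key_lt k1 k2 \/ key_lt k2 k1.
Proof.
  destruct k1 as [a i], k2 as [b j]. unfold key_lt; simpl. intros Ne.
  destruct (Req_dec a b) as [<-|Nab].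
  - destruct i, j; auto; congruence.
  - destruct (lt_total a b Nab); auto.
Qed.

Lemma key_lt_trans k1 k2 k3 : key_lt k1 k2 -> key_lt k2 k3 -> key_lt k1 k3.
Proof.
  destruct k1 as [a i], k2 as [b j], k3 as [c l]. unfold key_lt; simpl.
  intros [H1|[<- [-> ->]]] [H2|[<- [E ->]]]; eauto; discriminate.
Qed.

Lemma point_fresh k p : point k = Some p ->
  ~ span (fun q => exists k', key_lt k' k /\ point k' = Some q) p.
Proof.
  destruct k as [a i]. unfold point. simpl.
  destruct (output_cases a) as [E|[[side [x [E G]]]|[x [E G]]]]; rewrite E;
    destruct i; simpl; intro Hp; try discriminate; injection Hp as <-.
  - destruct G as [_ [_ G]]. intro Hs. apply G. eapply span_mono; [|exact Hs].
    intros q [[b j] [Hk Hq]]. destruct Hk as [Hk|[_ [_ Hk]]]; [|discriminate].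
    exists b. split; auto. destruct j; [right|left]; auto.
  - destruct G as [_ [_ [_ G]]]. intro Hs. apply G. eapply span_mono; [|exact Hs].
    intros q [[b j] [Hk Hq]]. unfold key_lt, point in Hk, Hq. simpl in Hk, Hq.
    destruct Hk as [Hk|[-> [-> _]]].
    + left. exists b. split; auto. destruct j; [right|left]; auto.
    + rewrite E in Hq. injection Hq as <-. now right.
  - destruct G as [_ [_ [G _]]]. intro Hs. apply G. eapply span_mono; [|exact Hs].
    intros q [[b j] [Hk Hq]]. destruct Hk as [Hk|[_ [_ Hk]]]; [|discriminate].
    exists b. split; auto. destruct j; [right|left]; auto.
Qed.

Lemma basis_independent : Q_independent basis.
Proof.
  assert (E : basis = fun p => exists k, point k = Some p).
  { apply functional_extensionality. intro p. apply propositional_extensionality.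
    unfold basis, added, point. split.
    - intros [a [H|H]]; [exists (a, false) | exists (a, true)]; auto.
    - intros [[a []] H]; exists a; auto. }
  rewrite E.
  exact (Q_independent_of_ordered_family key_lt point key_lt_total key_lt_trans point_fresh).
Qed.

Lemma added_unique a b p : added a p -> added b p -> a = b.
Proof.
  intros Ha Hb. apply NNPP. intro Ne.
  assert (Hlater : forall a b, lt a b -> added a p -> added b p -> False).
  { clear a b Ha Hb Ne. intros a b Hab Ha Hb.
    destruct (proj1 (or_comm _ _) Hb) as [H|H];
      [apply (point_fresh (b, true) p H) | apply (point_fresh (b, false) p H)];
      apply span_mem; destruct Ha as [Ha|Ha]; [exists (a, false) | exists (a, true) |
                                               exists (a, false) | exists (a, true)];
      split; auto; now left. }
  destruct (lt_total a b Ne); eauto.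
Qed.

Lemma added_countable a : countable (added a).
Proof.
  apply countable_union2; apply countable_subsingleton;
    intros x y Hx Hy; rewrite Hx in Hy; now injection Hy.
Qed.

Lemma earlier_countable a : countable (earlier a).
Proof. apply countable_union; auto using added_countable. Qed.

Lemma added_not_after_countable c :
  countable (fun x => exists b y, ~ lt c b /\ added b (x, y)).
Proof.
  apply countable_sub with (T := fun x => exists b, ~ lt c b /\ exists y, added b (x, y)).
  { intros x [b [y [Hb H]]]. eauto. }
  apply countable_union.
  - apply countable_sub with (T := fun b => lt b c \/ b = c).
    + intros b Hb. destruct (Req_dec b c) as [E|Ne]; auto.
      destruct (lt_total b c Ne); tauto.
    + apply countable_union2; auto. apply countable_subsingleton. congruence.
  - intros b _. apply (countable_image _ _ fst (added_countable b)).
    intros x [y H]. exists (x, y); auto.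
Qed.

(* An earlier graph of the same monotonicity meets the graph of [h] only over its small
   set; one of the opposite monotonicity meets it at most once. *)
Lemma not_avoids_small side a (h : R -> R) : monotone side h ->
  small side (fun x => ~ avoids a (x, h x)).
Proof.
  intros Hh. set (HI := small_sigma_ideal side).
  apply (ideal_sub _ HI) with (T := fun x => exists c, lt c a /\
    (small_set side c x \/ graph_fun (negb side) c x = h x)).
  - intros x Hx. apply NNPP. intro Hn. apply Hx. intros c side' Hc [Hs Hg]. apply Hn.
    exists c. split; auto. destruct (Bool.eqb_spec side' side) as [<-|Ne]; [now left|].
    right. replace side' with (negb side) in Hg; auto. now destruct side, side'.
  - apply (ideal_union _ HI); auto. intros c _. apply (ideal_union2 _ HI).
    + apply small_of_seq_small.
    + apply (ideal_countable _ HI), countable_subsingleton. intros x y Hx Hy.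
      apply (monotone_graphs_meet_once side h (graph_fun (negb side) c)); auto.
      apply fun_of_seq_monotone.
Qed.

Lemma graph_candidate_exists a side :
  ~ small side (borel_of_seq (task_borel (decode_task a))) ->
  exists x, graph_candidate a (earlier a) side x.
Proof.
  intros Hlarge. set (HI := small_sigma_ideal side). apply NNPP. intro Hn. apply Hlarge.
  apply (ideal_sub _ HI) with (T := fun x => ~ avoids a (x, graph_fun side a x) \/
                                           span (earlier a) (x, graph_fun side a x)).
  - intros x Bx. apply NNPP. intro Hx. apply Hn. exists x. unfold graph_candidate. tauto.
  - apply (ideal_union2 _ HI).
    + apply not_avoids_small, fun_of_seq_monotone.
    + apply (ideal_countable _ HI), span_graph_countable, earlier_countable.
Qed.

(* Both new points lie on decreasing lines, so the bad parameters form a null set. *)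
Lemma span_candidate_exists a : ~ span (earlier a) (target a) ->
  exists x, span_candidate a (earlier a) x.
Proof.
  intros Hv. set (HI := small_sigma_ideal true).
  set (v1 := fst (target a)). set (v2 := snd (target a)).
  assert (Hopp : monotone true (fun t => - t)) by (intros s t Hst; simpl; lra).
  assert (Hline : monotone true (fun t => v1 + v2 - t)) by (intros s t Hst; simpl; lra).
  apply NNPP. intro Hn. apply (R_not_small true).
  apply (ideal_sub _ HI) with (T := fun x => ~ avoids a (x, - x) \/
      (~ avoids a (complement_point a x) \/ (span (earlier a) (x, - x) \/
       span (fun p => earlier a p \/ p = (x, - x)) (complement_point a x)))).
  { intros x _. apply NNPP. intro Hx. apply Hn. exists x. unfold span_candidate. tauto. }
  apply (ideal_union2 _ HI); [|apply (ideal_union2 _ HI); [|apply (ideal_union2 _ HI)]].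
  - exact (not_avoids_small true a _ Hopp).
  - apply (ideal_sub _ HI) with (T := fun x => ~ avoids a (v1 - x, v1 + v2 - (v1 - x))).
    + intros x Hx. unfold complement_point in Hx. fold v1 v2 in Hx.
      now replace (v1 + v2 - (v1 - x)) with (v2 + x) by ring.
    + exact (null_reflect v1 _ (not_avoids_small true a _ Hline)).
  - apply (ideal_countable _ HI), span_graph_countable, earlier_countable.
  - apply (ideal_countable _ HI), span_shift_countable, Hv. apply earlier_countable.
Qed.

Lemma basis_spanning : Q_spanning basis.
Proof.
  intro v.
  set (a := encode_task (Task None (fun _ _ => 0) (fun _ _ => 0) (fun _ => 0) v) 0).
  assert (Ha : decode_task a = Task None (fun _ _ => 0) (fun _ _ => 0) (fun _ => 0) v)
    by apply decode_encode_task.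
  assert (Hv : target a = v) by (unfold target; now rewrite Ha).
  assert (Hbasis : forall p, earlier a p -> basis p) by (intros p [b [_ H]]; now exists b).
  destruct (classic (span (earlier a) v)) as [Hs|Hs].
  { exact (span_mono _ _ _ Hbasis Hs). }
  rewrite <- Hv in Hs.
  destruct (output_span a) as [x E]; [now rewrite Ha | auto | now apply span_candidate_exists|].
  replace v with (vadd (x, - x) (complement_point a x)).
  - apply span_add; apply span_mem; exists a; unfold added; rewrite E; simpl; auto.
  - unfold complement_point. rewrite Hv. apply R2_eq; simpl; ring.
Qed.

Lemma graph_small_countable side f M : monotone side f -> continuity f -> small side M ->
  countable (fun x => basis (x, f x) /\ M x).
Proof.
  intros Hf Hcf HM. destruct (small_of_seq_cofinal side M HM) as [s Hs].
  set (c := encode_task (Task None (fun _ => qvalues f) (fun _ => s) (fun _ => 0) (0, 0)) 0).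
  assert (Hc : decode_task c = Task None (fun _ => qvalues f) (fun _ => s) (fun _ => 0) (0, 0))
    by apply decode_encode_task.
  apply countable_sub with (T := fun x => exists b y, ~ lt c b /\ added b (x, y));
    [|apply added_not_after_countable].
  intros x [[b Hb] Mx]. exists b, (f x). split; auto. intro Hcb.
  apply (added_avoids _ _ Hb c side Hcb). simpl. split.
  - unfold small_set. rewrite Hc. auto.
  - unfold graph_fun. rewrite Hc. simpl. now rewrite fun_of_seq_qvalues.
Qed.

(* Every code of the task "a new point of the graph of [f] in [B]" yields such a point,
   and distinct stages add distinct points. *)
Lemma graph_large_not_countable side f B : monotone side f -> continuity f -> borel B ->
  ~ small side B -> ~ countable (fun x => basis (x, f x) /\ B x).
Proof.
  intros Hf Hcf HB Hlarge Hcnt. destruct (borel_of_seq_onto B HB) as [s Hs].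
  set (t := Task (Some side) (fun _ => qvalues f) (fun _ _ => 0) s (0, 0)).
  apply (task_codes_not_countable t).
  assert (Hpoint : forall a, decode_task a = t ->
            exists x, fst (output a) = Some (x, f x) /\ B x).
  { intros a Ha.
    assert (Hga : graph_fun side a = f)
      by (unfold graph_fun; rewrite Ha; now apply fun_of_seq_qvalues).
    destruct (output_graph a side) as [x [E [Bx _]]]; [now rewrite Ha | |].
    - apply graph_candidate_exists. rewrite Ha. intro Hsm. apply Hlarge.
      apply (ideal_sub _ (small_sigma_ideal side)) with (T := borel_of_seq s); auto.
      intros x Bx. now apply Hs.
    - exists x. rewrite Hga in E. split; auto. rewrite Ha in Bx. now apply Hs. }
  destruct (partial_choice R R 0 _ _ Hpoint) as [h Hh].
  apply (countable_preimage _ _ h Hcnt).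
  - intros a Ha. destruct (Hh a Ha) as [E Bx]. split; auto. exists a. now left.
  - intros a b Ha Hb E. destruct (Hh a Ha) as [Ea _], (Hh b Hb) as [Eb _].
    rewrite E in Ea. apply (added_unique a b (h b, f (h b))); now left.
Qed.

End Construction.

Lemma locally_abs_continuous_continuity g : locally_abs_continuous g -> continuity g.
Proof.
  intros Hg x eps Heps.
  destruct (Hg (x - 1) (x + 1) ltac:(lra) eps Heps) as [delta [Hd Hac]].
  exists (Rmin delta 1). split; [apply Rmin_glb_lt; lra|].
  intros y [[_ Ne] Hy]. simpl in *. unfold R_dist in *.
  assert (H1 := Rmin_l delta 1). assert (H2 := Rmin_r delta 1).
  destruct (Rle_dec x y) as [Hxy|Hxy].
  - rewrite Rabs_right in Hy by lra.
    specialize (Hac 0%nat (fun _ => x) (fun _ => y)). simpl in Hac.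
    apply Hac; try lra; intros; try lia; lra.
  - rewrite Rabs_left in Hy by lra.
    specialize (Hac 0%nat (fun _ => y) (fun _ => x)). simpl in Hac.
    rewrite <- Rabs_Ropp. replace (- (g y - g x)) with (g x - g y) by ring.
    apply Hac; try lra; intros; try lia; lra.
Qed.

Definition strong_small (side : bool) (L : R -> Prop) : Prop :=
  has_card_c L /\
  (forall M, small side M -> countable_set (inter L M)) /\
  (forall B, borel B -> ~ small side B -> ~ countable_set (inter L B)).

Lemma graph_strong_small (HCH : CH) lt (lt_wf : well_founded lt)
  (lt_total : forall a b, a <> b -> lt a b \/ lt b a)
  (lt_countable : forall a, countable (fun b => lt b a)) side f :
  monotone side f -> continuity f -> strong_small side (fun x => basis lt lt_wf (x, f x)).
Proof.
  intros Hf Hcf. split; [|split].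
  - destruct (HCH (fun x => basis lt lt_wf (x, f x))) as [Hc|Hc]; auto. exfalso.
    apply (graph_large_not_countable lt lt_wf lt_total lt_countable side f (fun _ => True));
      auto using R_not_small.
    + apply borel_open. intros x _. exists 1. split; [lra|auto].
    + apply countable_sub with (T := fun x => basis lt lt_wf (x, f x)); [tauto|exact Hc].
  - intros M HM. exact (graph_small_countable lt lt_wf lt_total lt_countable side f M Hf Hcf HM).
  - intros B HB HBs.
    exact (graph_large_not_countable lt lt_wf lt_total lt_countable side f B Hf Hcf HB HBs).
Qed.

Theorem mainTheorem9 :
  CH ->
  exists A : R2 -> Prop,
    hamel_basis_R2 A /\
    (forall f : R -> R, strictly_increasing f -> continuity f ->
       strong_luzin (fun x => A (x, f x))) /\
    (forall g : R -> R, strictly_decreasing g -> locally_abs_continuous g ->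
       strong_sierpinski (fun x => A (x, g x))).
Proof.
  intros HCH. destruct (CH_omega1_order HCH) as [lt [lt_wf [lt_trans [lt_total lt_countable]]]].
  exists (basis lt lt_wf). split; [split|split].
  - exact (basis_independent lt lt_wf lt_trans lt_total).
  - exact (basis_spanning lt lt_wf lt_countable).
  - intros f Hf Hcf.
    exact (graph_strong_small HCH lt lt_wf lt_total lt_countable false f Hf Hcf).
  - intros g Hg Hac.
    exact (graph_strong_small HCH lt lt_wf lt_total lt_countable true g Hg
             (locally_abs_continuous_continuity g Hac)).
Qed.
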